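(* Let $(G,\omega)$ be a weighted digraph without loops, and suppose $G$ has $b$ reciprocal pairs of edges $\{(u_i,v_i),(v_i,u_i)\}$, $i=1,\dots,b$, with weights $w(i)=\omega((u_i,v_i))$ and $w'(i)=\omega((v_i,u_i))$. Let $\Phi(A,t):=I+tL^T\sqrt Z\,(I-tV)^{-1}\sqrt Z\,R$. Then, as rational functions of $t$, \[\det\Phi(A,t)=\frac{\prod_{i=1}^b\bigl(1-t^2w(i)w'(i)\bigr)}{\det(I-tV)}.\]
   Context: $G=(V(G),E)$ with $n$ vertices and $m$ edges, $\omega:E\to(0,\infty)$. Source matrix $L\in\{0,1\}^{m\times n}$: $L_{ej}=1$ iff $e=(j,\cdot)$; target matrix $R\in\{0,1\}^{m\times n}$: $R_{ej}=1$ iff $e=(\cdot,j)$. $Z$ is the $m\times m$ diagonal matrix with $Z_{ee}=\omega(e)$, and $\sqrt Z$ its entrywise square root. $V$ is the $m\times m$ matrix with $V_{ef}=\sqrt{\omega(e)\omega(f)}$ if $e=(i,j)$, $f=(j,k)$ with $k\ne i$, and $V_{ef}=0$ otherwise. *)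

From HB Require Import structures.
From mathcomp Require Import all_boot all_order all_algebra.
Set Implicit Arguments. Unset Strict Implicit. Unset Printing Implicit Defensive.
Import Order.TTheory GRing.Theory Num.Theory.
Local Open Scope ring_scope.

(* A digraph with vertices 'I_n and edges 'I_m; edge e goes from src e to tgt e. *)

Definition simple_digraph n m (src tgt : 'I_m -> 'I_n) : Prop :=
  forall e f : 'I_m, src e = src f -> tgt e = tgt f -> e = f.

Definition loopless n m (src tgt : 'I_m -> 'I_n) : Prop :=
  forall e : 'I_m, src e != tgt e.

Definition Lmx (R : pzRingType) n m (src : 'I_m -> 'I_n) : 'M[R]_(m, n) :=
  \matrix_(e < m, j < n) (src e == j)%:R.

Definition Rmx (R : pzRingType) n m (tgt : 'I_m -> 'I_n) : 'M[R]_(m, n) :=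
  \matrix_(e < m, j < n) (tgt e == j)%:R.

Definition Zmx (R : pzRingType) m (w : 'I_m -> R) : 'M[R]_m :=
  \matrix_(e < m, f < m) ((e == f)%:R * w e).

Definition sqrtZmx (R : rcfType) m (w : 'I_m -> R) : 'M[R]_m :=
  \matrix_(e < m, f < m) ((e == f)%:R * Num.sqrt (w e)).

Definition Vmx (R : rcfType) n m (src tgt : 'I_m -> 'I_n) (w : 'I_m -> R)
  : 'M[R]_m :=
  \matrix_(e < m, f < m)
    (((tgt e == src f) && (tgt f != src e))%:R * Num.sqrt (w e * w f)).

Definition Phi (R : rcfType) n m (src tgt : 'I_m -> 'I_n) (w : 'I_m -> R)
  (t : R) : 'M[R]_n :=
  1%:M + t *: ((Lmx R src)^T *m sqrtZmx w
                *m invmx (1%:M - t *: Vmx src tgt w) *m sqrtZmx w *m Rmx R tgt).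

(* reciprocal pairs {(u,v),(v,u)}: each pair listed once, as the ordered pair
   of edge indices (e,f) with e = (u,v), f = (v,u) and u < v *)
Definition recip_pair n m (src tgt : 'I_m -> 'I_n) (p : 'I_m * 'I_m) : bool :=
  [&& src p.2 == tgt p.1, tgt p.2 == src p.1 & (src p.1 < tgt p.1)%N].

Definition recip_prod (R : rcfType) n m (src tgt : 'I_m -> 'I_n)
  (w : 'I_m -> R) (t : R) : R :=
  \prod_(p : 'I_m * 'I_m | recip_pair src tgt p) (1 - t ^+ 2 * w p.1 * w p.2).

From HB Require Import structures.
From mathcomp Require Import all_boot all_order all_algebra.
From mathcomp Require Import fingroup perm ring.
Import Order.TTheory GRing.Theory Num.Theory.
Local Open Scope ring_scope.

(* Write S = sqrt Z and X = (I - tV)^-1.  Sylvester's identity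
   det(I + AB) = det(I + BA) turns the n x n determinant of
   Phi = I + (t L^T S)(X S R) into the m x m determinant of
   I + X S R (t L^T S) = X (I - tV + t S R L^T S).
   As (R L^T) e f = [tgt e = src f], the term t S R L^T S puts back into tV
   exactly the entries removed by the non-backtracking condition of V, so
   I - tV + t S R L^T S = I + tJ, where the backtracking matrix J has
   J e f = sqrt(w e w f) when f is the reverse edge of e, and 0 otherwise.
   Hence det Phi = det(I + tJ) / det(I - tV).

   To evaluate det(I + tJ), split J = N1 + N2 according to whether the row
   edge e is forward (src e < tgt e) or not.  Then N1 N1 = 0 and N1 N2 is
   diagonal, so (I - tN1)(I + tJ) = I + tN2 - t^2 N1 N2.  Both I - tN1 and
   I + tN2 - t^2 N1 N2 are "layered": their off-diagonal entries only link a
   class of edges to its complement, so their determinants are the products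
   of their diagonal entries, namely 1 and prod_i (1 - t^2 w(i) w'(i)). *)

Lemma det_1addmxC (R : comPzRingType) n m (A : 'M[R]_(n, m)) (B : 'M[R]_(m, n)) :
  \det (1%:M + A *m B) = \det (1%:M + B *m A).
Proof.
set M := block_mx 1%:M (-A) B 1%:M.
have M_lower : M = block_mx 1%:M 0 B 1%:M *m block_mx 1%:M (-A) 0 (1%:M + B *m A).
  rewrite mulmx_block !mul1mx !mulmx1 !mul0mx !addr0.
  by rewrite mulmxN addrCA addNr addr0.
have M_upper : M = block_mx (1%:M + A *m B) (-A) 0 1%:M *m block_mx 1%:M 0 B 1%:M.
  rewrite mulmx_block !mul1mx !mulmx1 !mul0mx ?add0r ?addr0 mulNmx mulmx0 add0r.
  by rewrite addrK.
have := congr1 determinant M_upper; rewrite {1}M_lower.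
by rewrite !det_mulmx !det_ublock !det_lblock !det1 !mul1r !mulr1 => ->.
Qed.

(* If every nonzero off-diagonal entry K e f has e in p and f outside p, then
   no permutation other than the identity contributes to det K: following a
   nontrivial cycle would leave p twice in a row. *)
Lemma det_layered (R : comPzRingType) m (K : 'M[R]_m) (p : pred 'I_m) :
  (forall e f, e != f -> K e f != 0 -> p e && ~~ p f) -> \det K = \prod_i K i i.
Proof.
move=> layered; rewrite /determinant (bigD1 (1%g : 'S_m)) //=.
rewrite [X in _ + X]big1 ?addr0.
  by rewrite odd_perm1 expr0 mul1r; apply: eq_bigr => i _; rewrite perm1.
move=> s s_nid.
case: (pickP (fun i => K i (s i) == 0)) => [i /eqP Kis0 | Ks_neq0].
  by rewrite (bigD1 i) //= Kis0 mul0r mulr0.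
have [e e_neq_se] : exists e, e != s e.
  apply/existsP; apply: contraR s_nid => /existsPn s_id.
  by apply/eqP/permP => i; rewrite perm1; apply/eqP; rewrite eq_sym; apply/negbNE/s_id.
have se_neq_sse : s e != s (s e) by rewrite (inj_eq perm_inj).
have /andP[_ not_pse] := layered e (s e) e_neq_se (negbT (Ks_neq0 e)).
have /andP[pse _] := layered (s e) (s (s e)) se_neq_sse (negbT (Ks_neq0 (s e))).
by rewrite pse in not_pse.
Qed.

Section BacktrackingMatrix.
Variables (R : rcfType) (n m : nat) (src tgt : 'I_m -> 'I_n) (w : 'I_m -> R).
Hypotheses (G_simple : simple_digraph src tgt) (G_loopless : loopless src tgt).
Hypothesis w_gt0 : forall e, 0 < w e.

Definition reverse (e f : 'I_m) : bool := (tgt e == src f) && (tgt f == src e).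

Definition forward (e : 'I_m) : bool := (src e < tgt e)%N.

Definition backmx : 'M[R]_m :=
  \matrix_(e, f) ((reverse e f)%:R * Num.sqrt (w e * w f)).
Definition fwd_backmx : 'M[R]_m := \matrix_(e, f) ((forward e)%:R * backmx e f).
Definition bwd_backmx : 'M[R]_m := \matrix_(e, f) ((~~ forward e)%:R * backmx e f).

Lemma reverseC e f : reverse e f = reverse f e.
Proof. by rewrite /reverse andbC. Qed.

Lemma reverse_irrefl e : reverse e e = false.
Proof. by apply/negbTE; rewrite /reverse andbb eq_sym (G_loopless e). Qed.

Lemma reverse_forward {e f} : reverse e f -> forward f = ~~ forward e.
Proof.
move=> /andP[/eqP tgt_e /eqP tgt_f]; rewrite /forward -tgt_e tgt_f -leqNgt.
by rewrite ltn_neqAle eq_sym (G_loopless e).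
Qed.

Lemma reverse_uniq {e f g} : reverse e f -> reverse f g -> g = e.
Proof.
move=> /andP[/eqP tgt_e /eqP tgt_f] /andP[/eqP tgt_f' /eqP tgt_g].
by apply: G_simple; rewrite -?tgt_f' -?tgt_g ?tgt_f ?tgt_e.
Qed.

Lemma sqrtZmx_diag : sqrtZmx w = diag_mx (\row_e Num.sqrt (w e)).
Proof. by apply/matrixP => e f; rewrite !mxE mulr_natl. Qed.

Lemma tgtmx_srcmxT : Rmx R tgt *m (Lmx R src)^T = \matrix_(e, f) (tgt e == src f)%:R.
Proof.
apply/matrixP => e f; rewrite !mxE (bigD1 (tgt e)) //= big1 ?addr0.
  by rewrite !mxE eqxx mul1r eq_sym.
by move=> j /negbTE tgt_e_neq_j; rewrite !mxE eq_sym tgt_e_neq_j mul0r.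
Qed.

Lemma nonbacktracking_complement t :
  1%:M - t *: Vmx src tgt w + t *: (sqrtZmx w *m Rmx R tgt *m ((Lmx R src)^T *m sqrtZmx w))
  = 1%:M + t *: backmx.
Proof.
rewrite !mulmxA -(mulmxA _ (Rmx R tgt)) tgtmx_srcmxT sqrtZmx_diag.
rewrite mul_mx_diag mul_diag_mx.
apply/matrixP => e f; rewrite !mxE -addrA; congr (_ + _).
rewrite sqrtrM ?ltW // /reverse.
by case: (tgt e == src f); case: (tgt f == src e) => /=; ring.
Qed.

(* Sylvester's identity and the previous lemma reduce det Phi to det(I + tJ). *)
Lemma det_Phi_backmx t : 1%:M - t *: Vmx src tgt w \in unitmx ->
  \det (Phi src tgt w t) = \det (1%:M + t *: backmx) / \det (1%:M - t *: Vmx src tgt w).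
Proof.
move=> unit_IV; set X := invmx (1%:M - t *: Vmx src tgt w).
have Phi_prod : Phi src tgt w t =
    1%:M + (t *: ((Lmx R src)^T *m sqrtZmx w)) *m (X *m (sqrtZmx w *m Rmx R tgt)).
  by rewrite /Phi -scalemxAl !mulmxA.
have swapped : 1%:M + X *m (sqrtZmx w *m Rmx R tgt) *m (t *: ((Lmx R src)^T *m sqrtZmx w))
    = X *m (1%:M + t *: backmx).
  rewrite -nonbacktracking_complement mulmxDr mulVmx //.
  by rewrite -!scalemxAr !mulmxA.
by rewrite Phi_prod det_1addmxC swapped det_mulmx det_inv mulrC.
Qed.

Lemma backmx_split : backmx = fwd_backmx + bwd_backmx.
Proof.
apply/matrixP => e f; rewrite !mxE -mulrDl.
by case: (forward e); rewrite ?add0r ?addr0 mul1r.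
Qed.

Lemma fwd_backmx_support e f : fwd_backmx e f != 0 -> forward e && reverse e f.
Proof.
by rewrite !mxE; case: (forward e); case: (reverse e f); rewrite ?(mul0r, mulr0, eqxx).
Qed.

Lemma bwd_backmx_support e f : bwd_backmx e f != 0 -> ~~ forward e && reverse e f.
Proof.
by rewrite !mxE; case: (forward e); case: (reverse e f); rewrite ?(mul0r, mulr0, eqxx).
Qed.

(* A forward row of J only meets backward columns, so N1 N1 = 0. *)
Lemma fwd_backmx_sqr : fwd_backmx *m fwd_backmx = 0.
Proof.
apply/matrixP => e g; rewrite !mxE big1 // => f _; rewrite !mxE.
case rev_ef : (reverse e f); last by rewrite mul0r !mulr0 mul0r.
by rewrite (reverse_forward rev_ef); case: (forward e); rewrite ?(mul0r, mulr0).
Qed.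

(* N1 N2 is diagonal (the reverse edge is unique); its (e, e) entry is the
   product of the weights of e and of its reverse edge, when e is forward. *)
Lemma fwd_bwd_offdiag {e g} : e != g -> (fwd_backmx *m bwd_backmx) e g = 0.
Proof.
move=> e_neq_g; rewrite !mxE big1 // => f _; rewrite !mxE.
case rev_ef : (reverse e f); last by rewrite mul0r !mulr0 mul0r.
case rev_fg : (reverse f g); last by rewrite mul0r !mulr0.
by rewrite (reverse_uniq rev_ef rev_fg) eqxx in e_neq_g.
Qed.

Lemma fwd_bwd_diag e : (fwd_backmx *m bwd_backmx) e e =
  (forward e)%:R * \sum_f ((reverse e f)%:R * (w e * w f)).
Proof.
rewrite !mxE mulr_sumr; apply: eq_bigr => f _; rewrite !mxE.
case rev_ef : (reverse e f); last by rewrite !mul0r !mulr0 mul0r.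
rewrite reverseC rev_ef (reverse_forward rev_ef) negbK mulrC [w f * w e]mulrC.
have sqrt_sq := sqr_sqrtr (mulr_ge0 (ltW (w_gt0 e)) (ltW (w_gt0 f))).
by rewrite expr2 in sqrt_sq; case: (forward e); rewrite ?mul0r ?mulr0 //= !mul1r.
Qed.

(* I - tN1 is layered (forward rows to backward columns) with unit diagonal. *)
Lemma det_1subfwd t : \det (1%:M - t *: fwd_backmx) = 1.
Proof.
rewrite (@det_layered _ _ _ forward).
  by apply: big1 => e _; rewrite !mxE reverse_irrefl eqxx /= !mul0r !mulr0 subr0.
move=> e f e_neq_f; rewrite 4!mxE (negbTE e_neq_f) sub0r oppr_eq0 mulf_eq0 negb_or.
case/andP=> _ /fwd_backmx_support /andP[fwd_e rev_ef].
by rewrite (reverse_forward rev_ef) fwd_e.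
Qed.

Lemma mul_1subfwd_1addback t : (1%:M - t *: fwd_backmx) *m (1%:M + t *: backmx)
  = 1%:M + t *: bwd_backmx - t ^+ 2 *: (fwd_backmx *m bwd_backmx).
Proof.
rewrite backmx_split mulmxBl !mul1mx mulmxDr mulmx1 -scalemxAl -scalemxAr scalerA.
rewrite mulmxDr fwd_backmx_sqr add0r !scalerDr expr2.
rewrite opprD !addrA; congr (_ - _).
by rewrite -[_ + t *: bwd_backmx]addrA [t *: fwd_backmx + _]addrC addrA addrK.
Qed.

(* I + tN2 - t^2 N1 N2 is layered (backward rows to forward columns). *)
Lemma det_1addbwd_subfwdbwd t :
  \det (1%:M + t *: bwd_backmx - t ^+ 2 *: (fwd_backmx *m bwd_backmx))
  = \prod_e (1 - t ^+ 2 * (fwd_backmx *m bwd_backmx) e e).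
Proof.
rewrite (@det_layered _ _ _ (fun e => ~~ forward e)).
  apply: eq_bigr => e _; rewrite [LHS]mxE [X in _ + X]mxE [X in _ - X]mxE.
  by rewrite !mxE reverse_irrefl eqxx /= !mul0r !mulr0 addr0.
move=> e f e_neq_f; rewrite [X in X != 0]mxE [X in _ + X]mxE [X in _ - X]mxE.
rewrite (fwd_bwd_offdiag e_neq_f) mulr0 subr0 3!mxE (negbTE e_neq_f) add0r.
rewrite mulf_eq0 negb_or => /andP[_ /bwd_backmx_support /andP[bwd_e rev_ef]].
by rewrite (reverse_forward rev_ef) bwd_e.
Qed.

(* Each reciprocal pair is listed once, by its forward edge, and contributes
   the diagonal factor of that edge; every other diagonal factor is 1. *)
Lemma recip_prod_diag t :
  recip_prod src tgt w t = \prod_e (1 - t ^+ 2 * (fwd_backmx *m bwd_backmx) e e).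
Proof.
have -> : recip_prod src tgt w t =
    \prod_e \prod_(f | recip_pair src tgt (e, f)) (1 - t ^+ 2 * w e * w f).
  by rewrite pair_big_dep; apply: eq_bigl => -[e f].
apply: eq_bigr => e _; rewrite fwd_bwd_diag.
have pairE f : recip_pair src tgt (e, f) = forward e && reverse e f.
  by rewrite /recip_pair /reverse /forward /= [src f == _]eq_sym andbA andbC.
case fwd_e : (forward e); last first.
  by rewrite big_pred0 ?mul0r ?mulr0 ?subr0 // => f; rewrite pairE fwd_e.
have [f0 rev_ef0 | no_rev] := pickP (reverse e).
  have revE f : reverse e f = (f == f0).
    apply/idP/eqP => [rev_ef | ->//].
    by apply: reverse_uniq rev_ef; rewrite reverseC.
  rewrite (big_pred1 f0) => [|f]; last by rewrite pairE fwd_e revE.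
  rewrite (bigD1 f0) //= big1 ?addr0 => [|f /negbTE f_neq_f0]; last first.
    by rewrite revE f_neq_f0 mul0r.
  by rewrite revE eqxx !mul1r mulrA.
rewrite big_pred0 => [|f]; last by rewrite pairE no_rev andbF.
by rewrite big1 ?mulr0 ?subr0 // => f _; rewrite no_rev mul0r.
Qed.

Lemma det_1addbackmx t : \det (1%:M + t *: backmx) = recip_prod src tgt w t.
Proof.
rewrite recip_prod_diag -det_1addbwd_subfwdbwd -mul_1subfwd_1addback.
by rewrite det_mulmx det_1subfwd mul1r.
Qed.
End BacktrackingMatrix.

Theorem theorem5p6 (R : rcfType) (n m : nat) (src tgt : 'I_m -> 'I_n)
  (w : 'I_m -> R) (t : R) :
  simple_digraph src tgt -> loopless src tgt ->
  (forall e, 0 < w e) ->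
  \det (1%:M - t *: Vmx src tgt w) != 0 ->
  \det (Phi src tgt w t) =
    recip_prod src tgt w t / \det (1%:M - t *: Vmx src tgt w).
Proof.
move=> G_simple G_loopless w_gt0 det_IV_neq0.
have unit_IV : 1%:M - t *: Vmx src tgt w \in unitmx by rewrite unitmxE unitfE.
by rewrite det_Phi_backmx // det_1addbackmx.
Qed.
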